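(* For any $A>0$, $\epsilon>0$ and every $N$ (sufficiently large), there is a $z=z(N,A,\epsilon)$ with $\log\log z>(1-\epsilon)\log\log N$ and $z<N^{\epsilon}$ such that, for all but $O_{A,\epsilon}(N(\log N)^{-A})$ integers $n$ between $1$ and $N$: (1) $\prod_{p\mid n,\ p\leq z} p^{v_p(n)} < N^{\epsilon}$; (2) $\omega(n) - \#\{p \text{ prime}: p\mid n,\ p\leq z\} < \epsilon\log\log z$.
   Context: $v_p(n)$ is the exponent of the prime $p$ in $n$; $\omega(n)$ is the number of distinct prime divisors of $n$; $p$ ranges over primes. *)

From Stdlib Require Import Reals.
From mathcomp Require Import all_boot.

Definition Rltb (x y : R) : bool := if Rlt_dec x y then true else false.
Definition Rleb (x y : R) : bool := if Rle_dec x y then true else false.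

Definition smooth_part (z : R) (n : nat) : nat :=
  \prod_(p <- primes n | Rleb (INR p) z) p ^ logn p n.

Definition omega (n : nat) : nat := size (primes n).

Definition omega_le (z : R) (n : nat) : nat :=
  size [seq p <- primes n | Rleb (INR p) z].

Definition good (N : nat) (eps z : R) (n : nat) : bool :=
  Rltb (INR (smooth_part z n)) (Rpower (INR N) eps) &&
  Rltb (Rminus (INR (omega n)) (INR (omega_le z n))) (Rmult eps (ln (ln z))).

(* Put [L = ln ln N], [K = eps L / 2] and choose [z] with [ln z = ln N / K].  An integer
   [n <= N] has at most [ln N / ln z = K < eps ln ln z] prime factors above [z], so
   condition (2) always holds, and condition (1) can only fail when the [z]-smooth part
   of [n] is at least [Y = N^eps].  By Rankin's trick, for every [0 < s < 1] the number
   of such [n] is at most [N Y^(-s) prod_(p <= z) (p - 1) / (p - p^s)].  For [s = a / ln z]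
   each factor is [1 + O(a e^a ln p / (p ln z))], and Chebyshev's bound
   [sum_(p <= z) ln p / p <= 2 ln z + O(1)] makes the product [O_a(1)]; with
   [a = 4 A / eps^2] one gets [Y^s = (ln N)^(2 A)]. *)

From HB Require Import structures.
From Stdlib Require Import Reals Lra ZArith.
From mathcomp Require Import all_boot.
Local Open Scope R_scope.

Lemma ln_le x y : 0 < x -> x <= y -> ln x <= ln y.
Proof. by move=> x_gt0 [/(ln_increasing _ _ x_gt0)/Rlt_le | <-] //; apply: Rle_refl. Qed.

Lemma exp_le x y : x <= y -> exp x <= exp y.
Proof. by move=> [/exp_increasing/Rlt_le | <-] //; apply: Rle_refl. Qed.

Lemma ln_ge0 x : 1 <= x -> 0 <= ln x.
Proof. by move=> x_ge1; rewrite -ln_1; apply: ln_le; lra. Qed.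

Lemma ln_le_subr1 x : 0 < x -> ln x <= x - 1.
Proof. by move=> x_gt0; have := exp_ineq1_le (ln x); rewrite exp_ln //; lra. Qed.

Lemma ln_lt_2sqrt x : 0 < x -> ln x < 2 * sqrt x.
Proof.
move=> x_gt0; have sqrt_gt0 := sqrt_lt_R0 x x_gt0.
rewrite -{1}(sqrt_sqrt x) ?ln_mult; try lra.
by have := ln_le_subr1 _ sqrt_gt0; lra.
Qed.

Lemma INR_gt0 {n} : (0 < n)%N -> 0 < INR n.
Proof. by move=> n_gt0; apply: (lt_INR 0); apply/ltP. Qed.

Lemma INR_expn m n : INR (m ^ n) = INR m ^ n.
Proof. by elim: n => [|n IHn]; rewrite ?expnS ?mult_INR ?IHn. Qed.

Lemma INR_prime_ge2 {p} : prime p -> 2 <= INR p.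
Proof. by move=> /prime_gt1 p_gt1; apply: (le_INR 2); apply/leP. Qed.

Lemma RlebP x y : reflect (x <= y) (Rleb x y).
Proof. by rewrite /Rleb; case: Rle_dec => h; constructor. Qed.

Lemma RltbP x y : reflect (x < y) (Rltb x y).
Proof. by rewrite /Rltb; case: Rlt_dec => h; constructor. Qed.

Lemma Rplus_associative : associative Rplus. Proof. by move=> *; ring. Qed.
Lemma Rmult_associative : associative Rmult. Proof. by move=> *; ring. Qed.

HB.instance Definition _ :=
  Monoid.isComLaw.Build R 0 Rplus Rplus_associative Rplus_comm Rplus_0_l.
HB.instance Definition _ :=
  Monoid.isComLaw.Build R 1 Rmult Rmult_associative Rmult_comm Rmult_1_l.
HB.instance Definition _ := Monoid.isMulLaw.Build R 0 Rmult Rmult_0_l Rmult_0_r.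
HB.instance Definition _ :=
  Monoid.isAddLaw.Build R Rmult Rplus Rmult_plus_distr_r Rmult_plus_distr_l.

Notation "\sum_ ( i <- r | P ) F" := (\big[Rplus/0]_(i <- r | P) F) : R_scope.
Notation "\sum_ ( i <- r ) F" := (\big[Rplus/0]_(i <- r) F) : R_scope.
Notation "\prod_ ( i <- r | P ) F" := (\big[Rmult/1]_(i <- r | P) F) : R_scope.
Notation "\prod_ ( i <- r ) F" := (\big[Rmult/1]_(i <- r) F) : R_scope.

Section RealBigops.
Variables (I : Type) (r : seq I) (P : pred I).

Lemma sumR_le (F G : I -> R) :
  (forall i, P i -> F i <= G i) -> \sum_(i <- r | P i) F i <= \sum_(i <- r | P i) G i.
Proof. by apply: (big_ind2 Rle) => *; lra. Qed.

Lemma sumR_const (c : R) : \sum_(i <- r | P i) c = INR (count P r) * c.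
Proof.
rewrite -sum1_count (big_morph INR plus_INR (erefl (INR 0))) big_distrl /=.
by apply: eq_bigr => _ _; rewrite Rmult_1_l.
Qed.

Lemma prodR_1D_le_exp (F : I -> R) : (forall i, P i -> 0 <= F i) ->
  \prod_(i <- r | P i) (1 + F i) <= exp (\sum_(i <- r | P i) F i).
Proof.
move=> F_ge0; suff [] : 0 <= \prod_(i <- r | P i) (1 + F i) <= exp (\sum_(i <- r | P i) F i) by [].
apply: (big_ind2 (fun x y => 0 <= x <= exp y))
  => [|x1 x2 y1 y2 [x1_ge0 x12] [y1_ge0 y12]|i /F_ge0 Fi_ge0].
- by rewrite exp_0; lra.
- by rewrite exp_plus; split; [apply: Rmult_le_pos | apply: Rmult_le_compat].
- by have := exp_ineq1_le (F i); lra.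
Qed.

Lemma ln_prodR (F : I -> R) : (forall i, P i -> 0 < F i) ->
  ln (\prod_(i <- r | P i) F i) = \sum_(i <- r | P i) ln (F i).
Proof.
move=> F_gt0; suff [] : 0 < \prod_(i <- r | P i) F i /\
  ln (\prod_(i <- r | P i) F i) = \sum_(i <- r | P i) ln (F i) by [].
apply: (big_ind2 (fun x y => 0 < x /\ ln x = y))
  => [|x1 x2 y1 y2 [x1_gt0 <-] [y1_gt0 <-]|i /F_gt0 Fi_gt0] //.
- by rewrite ln_1; split; lra.
- by rewrite ln_mult //; split => //; apply: Rmult_lt_0_compat.
Qed.

End RealBigops.

Lemma sumR_exchange_cond (I J : Type) (r : seq I) (s : seq J) (Q : J -> I -> bool)
    (F : J -> R) (G : I -> R) :
  \sum_(i <- r) \sum_(j <- s | Q j i) F j * G i = \sum_(j <- s) F j * \sum_(i <- r | Q j i) G i.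
Proof.
under eq_bigr do rewrite big_mkcond.
rewrite exchange_big; apply: eq_bigr => j _.
by rewrite big_distrr [RHS]big_mkcond; apply: eq_bigr => i _; case: ifP => _; ring.
Qed.

Lemma INR_prod (I : Type) (r : seq I) (P : pred I) (F : I -> nat) :
  INR (\prod_(i <- r | P i) F i)%N = \prod_(i <- r | P i) INR (F i).
Proof. exact: (big_morph INR mult_INR (erefl (INR 1))). Qed.

Lemma INR_divn_le m d : (0 < d)%N -> INR (m %/ d) <= INR m / INR d.
Proof.
move=> d_gt0; have d_pos := INR_gt0 d_gt0.
apply: (Rmult_le_reg_r _ _ _ d_pos); rewrite /Rdiv Rmult_assoc Rinv_l ?Rmult_1_r; last lra.
by rewrite -mult_INR; apply: le_INR; apply/leP; exact: leq_divM.
Qed.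

Lemma iota1S M : iota 1 M.+1 = iota 1 M ++ [:: M.+1].
Proof. by rewrite -(addn1 M) iotaD add1n addn1. Qed.

(** * Rankin's trick *)

Lemma sumR_pow_telescope (x : R) v : \sum_(a <- iota 1 v) (x ^ a - x ^ a.-1) = x ^ v - 1.
Proof.
elim: v => [|v IHv]; first by rewrite big_nil /=; lra.
by rewrite iota1S big_cat big_seq1 IHv /=; lra.
Qed.

Lemma sumR_pow_telescope_widen (x : R) v M : (v <= M)%N ->
  \sum_(a <- iota 1 M | (a <= v)%N) (x ^ a - x ^ a.-1) = x ^ v - 1.
Proof.
move=> le_vM; rewrite -sumR_pow_telescope.
have -> : iota 1 v = index_iota 1 v.+1 by rewrite /index_iota subSS subn0.
have -> : iota 1 M = index_iota 1 M.+1 by rewrite /index_iota subSS subn0.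
by rewrite (big_nat_widen 1 v.+1 M.+1).
Qed.

Lemma sumR_pow_step_div_le (x y : R) M : 1 <= x < y ->
  \sum_(a <- iota 1 M) (x ^ a - x ^ a.-1) / y ^ a <= (x - 1) / (y - x).
Proof.
move=> [x_ge1 lt_xy].
suff -> : \sum_(a <- iota 1 M) (x ^ a - x ^ a.-1) / y ^ a = (x - 1) / (y - x) * (1 - (x / y) ^ M).
  have : 0 <= (x / y) ^ M.
    by apply: pow_le; apply: Rmult_le_pos; [lra | left; apply: Rinv_0_lt_compat; lra].
  have : 0 <= (x - 1) / (y - x) by apply: Rmult_le_pos; [lra | left; apply: Rinv_0_lt_compat; lra].
  by nra.
elim: M => [|M IHM]; first by rewrite big_nil /=; lra.
rewrite iota1S big_cat big_seq1 IHM /= /Rdiv Rpow_mult_distr pow_inv.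
by field; split; [apply: pow_nonzero|]; lra.
Qed.

Lemma sumR_dvdn_reindex (F : nat -> R) d M : (0 < d)%N ->
  \sum_(n <- iota 1 M | d %| n) F n = \sum_(m <- iota 1 (M %/ d)) F (d * m)%N.
Proof.
move=> d_gt0; elim: M => [|M IHM]; first by rewrite div0n !big_nil.
rewrite iota1S big_cat big_cons big_nil /= IHM.
case: (boolP (d %| M.+1)) => [dvd_dM|ndvd_dM].
- have eq_div : (M.+1 %/ d = (M %/ d).+1)%N by rewrite divnS // dvd_dM.
  by rewrite eq_div iota1S big_cat big_seq1 /= -eq_div mulnC divnK //; lra.
- by rewrite divnS // (negbTE ndvd_dM) add0n; lra.
Qed.

Section RankinWeight.
Variable t : nat -> R.
Hypothesis t_ge1 : forall {p}, prime p -> 1 <= t p.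
Hypothesis t_lt : forall {p}, prime p -> t p < INR p.

Definition weight (P : seq nat) (n : nat) : R := \prod_(p <- P) t p ^ logn p n.

(* [euler_factor p = (p - 1) / (p - t p)], the mean value of [t p ^ logn p n] over [n]. *)
Definition euler_factor (p : nat) : R := 1 + (t p - 1) / (INR p - t p).

Lemma euler_factor_ge1 p : prime p -> 1 <= euler_factor p.
Proof.
move=> p_pr; have := t_ge1 p_pr; have := t_lt p_pr => ? ?.
rewrite /euler_factor; suff : 0 <= (t p - 1) / (INR p - t p) by lra.
by apply: Rmult_le_pos; [lra | left; apply: Rinv_0_lt_compat; lra].
Qed.

Lemma weight_pfactorM P q a m : prime q -> q \notin P -> (0 < m)%N ->
  weight P (q ^ a * m)%N = weight P m.
Proof.
move=> q_pr qNP m_gt0; apply: eq_big_seq => p p_in_P.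
have qa_gt0 : (0 < q ^ a)%N by rewrite expn_gt0 prime_gt0.
rewrite lognM // lognX logn_prime //.
have -> : (p == q) = false by apply: contraNF qNP => /eqP <-.
by rewrite muln0 add0n.
Qed.

Lemma weight_cons_telescope q P n M : prime q -> (0 < n <= M)%N ->
  weight (q :: P) n =
  weight P n + \sum_(a <- iota 1 M | q ^ a %| n) (t q ^ a - t q ^ a.-1) * weight P n.
Proof.
move=> q_pr /andP [n_gt0 le_nM].
have le_vM : (logn q n <= M)%N := ltnW (leq_trans (ltn_logl q n_gt0) le_nM).
rewrite /weight big_cons -big_distrl /= -/(weight P n).
rewrite (eq_bigl (fun a => a <= logn q n)%N) => [|a]; last exact: pfactor_dvdn.
by rewrite sumR_pow_telescope_widen //; ring.
Qed.

Lemma sum_weight_dvdn_le P q a M c : prime q -> q \notin P -> 0 <= c ->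
  (forall M, \sum_(n <- iota 1 M) weight P n <= INR M * c) ->
  \sum_(n <- iota 1 M | q ^ a %| n) weight P n <= INR M / INR q ^ a * c.
Proof.
move=> q_pr qNP c_ge0 sum_le.
have qa_gt0 : (0 < q ^ a)%N by rewrite expn_gt0 prime_gt0.
rewrite sumR_dvdn_reindex // (eq_big_seq (weight P)) => [|m]; last first.
  by rewrite mem_iota => /andP [m_gt0 _]; exact: weight_pfactorM.
apply: Rle_trans (sum_le _) _; apply: Rmult_le_compat_r => //.
by rewrite -INR_expn; exact: INR_divn_le.
Qed.

(* Write [t q ^ logn q n = 1 + sum_(1 <= a, q ^ a %| n) (t q ^ a - t q ^ a.-1)] and sum over
   [n] first: the multiples of [q ^ a] up to [M] contribute at most [M / q ^ a] times the
   bound for [P], and the resulting geometric series sums to [(t q - 1) / (q - t q)]. *)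
Lemma sum_weight_le P : uniq P -> all prime P -> forall M,
  \sum_(n <- iota 1 M) weight P n <= INR M * \prod_(p <- P) euler_factor p.
Proof.
elim: P => [|q P IHP] /= => [_ _ M | /andP [qNP P_uniq] /andP [q_pr P_pr] M].
  rewrite big_nil Rmult_1_r (eq_bigr (fun _ => 1)) => [|n _]; last exact: big_nil.
  by rewrite sumR_const count_predT size_iota; lra.
set c := \prod_(p <- P) euler_factor p; set x := t q.
have c_ge1 : 1 <= c.
  rewrite /c big_seq; apply: (big_ind (Rle 1)) => [|u v|p /(allP P_pr)/euler_factor_ge1] //.
  - lra.
  - nra.
have x_ge1 : 1 <= x := t_ge1 q_pr; have x_lt : x < INR q := t_lt q_pr.
have weight_cons n : n \in iota 1 M -> weight (q :: P) n =
    weight P n + \sum_(a <- iota 1 M | q ^ a %| n) (x ^ a - x ^ a.-1) * weight P n.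
  by rewrite mem_iota add1n ltnS; exact: weight_cons_telescope.
rewrite (eq_big_seq _ weight_cons) big_split /= sumR_exchange_cond.
have step_ge0 a : 0 <= x ^ a - x ^ a.-1.
  by case: a => [|a] /=; [lra | have := pow_R1_Rle x a x_ge1; nra].
have sum_step_le :
    \sum_(a <- iota 1 M) (x ^ a - x ^ a.-1) * \sum_(n <- iota 1 M | q ^ a %| n) weight P n
    <= \sum_(a <- iota 1 M) (x ^ a - x ^ a.-1) * (INR M / INR q ^ a * c).
  apply: sumR_le => a _; apply: Rmult_le_compat_l => //.
  by apply: sum_weight_dvdn_le => //; [lra | exact: IHP].
apply: Rle_trans (Rplus_le_compat _ _ _ _ (IHP P_uniq P_pr M) sum_step_le) _.
have := sumR_pow_step_div_le _ _ M (conj x_ge1 x_lt).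
rewrite big_cons -/c /euler_factor -/x.
have -> : \sum_(a <- iota 1 M) (x ^ a - x ^ a.-1) * (INR M / INR q ^ a * c) =
    INR M * c * \sum_(a <- iota 1 M) (x ^ a - x ^ a.-1) / INR q ^ a.
  by rewrite big_distrr; apply: eq_bigr => a _ /=; rewrite /Rdiv; ring.
have : 0 <= INR M * c by apply: Rmult_le_pos; [exact: pos_INR | lra].
by nra.
Qed.

End RankinWeight.

(** * Chebyshev's bound *)

Lemma prod_uniq_primes_dvdn (s : seq nat) c : uniq s -> all prime s ->
  {in s, forall p, p %| c} -> (\prod_(p <- s) p %| c)%N.
Proof.
elim: s => [|p s IHs] /=; first by rewrite big_nil dvd1n.
move=> /andP [pNs s_uniq] /andP [p_pr s_pr] s_dvd.
have coprime_p_prod : coprime p (\prod_(q <- s) q).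
  rewrite big_seq; apply: (big_ind (coprime p)) => [|u v|q q_in_s]; first exact: coprimen1.
    by rewrite coprimeMr => -> .
  have q_pr := allP s_pr q q_in_s.
  by rewrite prime_coprime // dvdn_prime2 //; apply: contraNneq pNs => ->.
rewrite big_cons Gauss_dvd // s_dvd ?mem_head // IHs // => q q_in_s.
by apply: s_dvd; rewrite in_cons q_in_s orbT.
Qed.

Lemma ln_INR_prod_primes (s : seq nat) : all prime s ->
  ln (INR (\prod_(p <- s) p)%N) = \sum_(p <- s) ln (INR p).
Proof.
move=> s_pr; rewrite INR_prod big_seq ln_prodR -?big_seq // => p /(allP s_pr) p_pr.
exact: INR_gt0 (prime_gt0 p_pr).
Qed.

Lemma prod_primes_gt0 (s : seq nat) : all prime s -> (0 < \prod_(p <- s) p)%N.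
Proof.
move=> s_pr; rewrite big_seq; apply: (big_ind (leq 1)) => // [u v|p /(allP s_pr)/prime_gt0] //.
by rewrite muln_gt0 => -> ->.
Qed.

Lemma prime_ndvd_fact p m : prime p -> (m < p)%N -> ~~ (p %| m`!).
Proof.
move=> p_pr; elim: m => [|m IHm] lt_mp; first by rewrite fact0 dvdn1; apply: contraTneq p_pr => ->.
rewrite factS Euclid_dvdM // (negbTE (IHm (ltnW lt_mp))) orbF.
by apply: contraTN lt_mp => /(dvdn_leq (ltn0Sn m)); rewrite -leqNgt.
Qed.

Lemma prime_dvd_central_binomial p m : prime p -> (m < p <= m.*2)%N -> (p %| 'C(m.*2, m))%N.
Proof.
move=> p_pr /andP [lt_mp le_p2m].
have le_m2m : (m <= m.*2)%N by rewrite -addnn leq_addr.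
have := dvdn_fact (introT andP (conj (prime_gt0 p_pr) le_p2m)).
rewrite -(bin_fact le_m2m) -addnn addnK Gauss_dvdl // prime_coprime //.
by rewrite Euclid_dvdM // negb_or andbb prime_ndvd_fact.
Qed.

Lemma central_binomial_le m : ('C(m.*2, m) <= 4 ^ m)%N.
Proof.
have lt_m2m : (m < m.*2.+1)%N by rewrite ltnS -addnn leq_addr.
have := expnDn 1 1 m.*2; rewrite (bigD1 (Ordinal lt_m2m)) //= !exp1n !muln1.
have -> : (4 ^ m = 2 ^ m.*2)%N by rewrite -mul2n expnM.
by move=> ->; exact: leq_addr.
Qed.

Lemma sum_ln_primes_between m s : uniq s -> all prime s ->
  all (fun p => m < p <= m.*2)%N s -> \sum_(p <- s) ln (INR p) <= INR m * (2 * ln 2).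
Proof.
move=> s_uniq s_pr s_mid; rewrite -ln_INR_prod_primes //.
have prod_dvd : (\prod_(p <- s) p %| 'C(m.*2, m))%N.
  apply: prod_uniq_primes_dvdn => // p p_in_s.
  by apply: prime_dvd_central_binomial; [exact: (allP s_pr) | exact: (allP s_mid)].
have bin_gt0 : (0 < 'C(m.*2, m))%N by rewrite bin_gt0 -addnn leq_addr.
apply: Rle_trans (ln_le _ (INR (4 ^ m)) (INR_gt0 (prod_primes_gt0 _ s_pr)) _) _.
  by apply: le_INR; apply/leP; exact: leq_trans (dvdn_leq bin_gt0 prod_dvd) (central_binomial_le m).
rewrite INR_expn ln_pow; last by rewrite /=; lra.
have -> : INR 4 = 2 * 2 by rewrite /=; ring.
by rewrite ln_mult; lra.
Qed.

Lemma sum_ln_div_primes_pow2_le J s : uniq s -> all prime s -> all (fun p => p <= 2 ^ J)%N s ->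
  \sum_(p <- s) ln (INR p) / INR p <= INR J * (2 * ln 2).
Proof.
elim: J s => [|J IHJ] s s_uniq s_pr s_le.
  have -> : s = [::].
    case: s {s_uniq} s_pr s_le => // p s /andP [/prime_gt1 p_gt1 _] /andP [p_le1 _].
    by have := leq_trans p_gt1 p_le1.
  by rewrite big_nil /=; lra.
have ln2_gt0 : 0 < ln 2 by have := ln_lt_2; lra.
have pow2_gt0 : 0 < INR (2 ^ J) by apply: INR_gt0; rewrite expn_gt0.
set small := [seq p <- s | p <= 2 ^ J]%N; set large := [seq p <- s | ~~ (p <= 2 ^ J)]%N.
have large_uniq : uniq large := filter_uniq _ s_uniq.
have large_pr : all prime large.
  by rewrite all_filter; apply: sub_all s_pr => p /= ->; rewrite implybT.
have large_mid : all (fun p => 2 ^ J < p <= (2 ^ J).*2)%N large.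
  rewrite all_filter; apply: sub_all s_le => p /= p_le; rewrite -ltnNge -muln2 -expnSr.
  by apply/implyP => ->.
rewrite S_INR (bigID (fun p => p <= 2 ^ J)%N) /= -[X in X + _]big_filter -[X in _ + X]big_filter.
rewrite -/small -/large.
have small_le : \sum_(p <- small) ln (INR p) / INR p <= INR J * (2 * ln 2).
  apply: IHJ; first exact: filter_uniq.
    by rewrite all_filter; apply: sub_all s_pr => p /= ->; rewrite implybT.
  by rewrite all_filter; apply/allP => p _; apply/implyP.
suff large_le : \sum_(p <- large) ln (INR p) / INR p <= 2 * ln 2 by lra.
apply: Rle_trans (_ : \sum_(p <- large) / INR (2 ^ J) * ln (INR p) <= _).
  rewrite big_seq [X in _ <= X]big_seq; apply: sumR_le => p /(allP large_mid) /andP [lt_p _].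
  have lt_INR_p : INR (2 ^ J) < INR p by apply: lt_INR; apply/ltP.
  have p_ge1 : 1 <= INR p by apply: (le_INR 1); apply/leP; exact: leq_ltn_trans (leq0n _) lt_p.
  rewrite /Rdiv [X in _ <= X]Rmult_comm; apply: Rmult_le_compat_l; first exact: ln_ge0.
  by left; apply: Rinv_lt_contravar => //; apply: Rmult_lt_0_compat; lra.
rewrite -big_distrr /=; apply: Rle_trans (Rmult_le_compat_l _ _ _ _
  (sum_ln_primes_between _ _ large_uniq large_pr large_mid)) _.
  by left; apply: Rinv_0_lt_compat.
by right; field; lra.
Qed.

Lemma sum_ln_div_primes_le (z : R) s : 1 < z -> uniq s -> all prime s ->
  all (fun p => Rleb (INR p) z) s -> \sum_(p <- s) ln (INR p) / INR p <= 2 * ln z + 2 * ln 2.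
Proof.
move=> z_gt1 s_uniq s_pr s_le.
have ln2_gt0 : 0 < ln 2 by have := ln_lt_2; lra.
have lnz_gt0 : 0 < ln z by rewrite -ln_1; apply: ln_increasing; lra.
have [J [J_ge J_le]] : exists J : nat, ln z / ln 2 <= INR J <= ln z / ln 2 + 1.
  have [up_gt up_le] := archimed (ln z / ln 2).
  have up_ge0 : (0 <= up (ln z / ln 2))%Z.
    apply: le_IZR; suff : 0 <= ln z / ln 2 by lra.
    by apply: Rmult_le_pos; [lra | left; apply: Rinv_0_lt_compat].
  by exists (Z.to_nat (up (ln z / ln 2))); rewrite INR_IZR_INZ Z2Nat.id //; lra.
apply: Rle_trans (sum_ln_div_primes_pow2_le J _ s_uniq s_pr _) _.
  apply/allP => p p_in_s; have /RlebP p_le_z := allP s_le p p_in_s.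
  have p_ge2 := INR_prime_ge2 (allP s_pr p p_in_s).
  have INR2 : INR 2 = 2 by rewrite /=; lra.
  apply/leP; apply: INR_le; rewrite INR_expn INR2 -Rpower_pow; last lra.
  rewrite /Rpower -(exp_ln (INR p)); last lra.
  apply: exp_le; apply: Rle_trans (ln_le _ _ _ p_le_z) _; first lra.
  suff : ln z <= INR J * ln 2 by lra.
  have := Rmult_le_compat_r (ln 2) _ _ (Rlt_le _ _ ln2_gt0) J_ge.
  by rewrite /Rdiv Rmult_assoc Rinv_l; lra.
have := Rmult_le_compat_r (2 * ln 2) _ _ ltac:(lra) J_le.
by have -> : (ln z / ln 2 + 1) * (2 * ln 2) = 2 * ln z + 2 * ln 2 by field; lra.
Qed.

(** * Counting integers with a large smooth part *)

(* For [n <= N], only the primes up to [N] can divide [n]; this keeps the list finite. *)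
Definition primes_upto (N : nat) (z : R) : seq nat :=
  [seq p <- iota 1 N | prime p && Rleb (INR p) z].

Lemma primes_upto_uniq N z : uniq (primes_upto N z).
Proof. exact: filter_uniq (iota_uniq _ _). Qed.

Lemma primes_upto_prime N z : all prime (primes_upto N z).
Proof. by apply/allP => p; rewrite mem_filter => /andP [/andP []]. Qed.

Lemma primes_upto_le N z : all (fun p => Rleb (INR p) z) (primes_upto N z).
Proof. by apply/allP => p; rewrite mem_filter => /andP [/andP []]. Qed.

Lemma smooth_part_primes_upto N z n : (0 < n <= N)%N ->
  smooth_part z n = (\prod_(p <- primes_upto N z) p ^ logn p n)%N.
Proof.
move=> /andP [n_gt0 le_nN]; rewrite /smooth_part /primes_upto big_filter.
rewrite [RHS](bigID (fun p => p \in primes n)) /= [X in (_ * X)%N]big1 ?muln1; last first.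
  move=> p /andP [_ pNn]; suff -> : logn p n = 0%N by rewrite expn0.
  by apply/eqP; rewrite -leqn0 leqNgt logn_gt0.
rewrite -big_filter -[RHS]big_filter; apply: perm_big; apply: uniq_perm.
- exact: filter_uniq (primes_uniq n).
- exact: filter_uniq (iota_uniq 1 N).
move=> p; rewrite !mem_filter mem_iota add1n ltnS.
case: (boolP (p \in primes n)) => [p_in|]; rewrite ?andbF //=.
move: p_in; rewrite mem_primes => /and3P [p_pr _ p_dvd].
by rewrite p_pr prime_gt0 // (leq_trans (dvdn_leq n_gt0 p_dvd)) //; case: Rleb.
Qed.

Lemma Rpower_prod_pfactor σ P n : all prime P ->
  Rpower (INR (\prod_(p <- P) p ^ logn p n)%N) σ = weight (fun p => Rpower (INR p) σ) P n.
Proof.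
move=> P_pr; rewrite INR_prod /weight big_seq [RHS]big_seq.
suff [] : 0 < \prod_(p <- P | p \in P) INR (p ^ logn p n) /\
  Rpower (\prod_(p <- P | p \in P) INR (p ^ logn p n)) σ =
  \prod_(p <- P | p \in P) Rpower (INR p) σ ^ logn p n by [].
apply: (big_ind2 (fun x y => 0 < x /\ Rpower x σ = y))
  => [|x1 y1 x2 y2 [x1_gt0 <-] [x2_gt0 <-]|p /(allP P_pr) p_pr].
- by rewrite /Rpower ln_1 Rmult_0_r exp_0; split; lra.
- by rewrite Rpower_mult_distr //; split => //; apply: Rmult_lt_0_compat.
have p_gt0 := INR_gt0 (prime_gt0 p_pr).
rewrite INR_expn; split; first exact: pow_lt.
rewrite -Rpower_pow // -Rpower_pow; last exact: exp_pos.
by rewrite !Rpower_mult Rmult_comm.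
Qed.

Lemma Rpower_prime_ge1 σ p : 0 <= σ -> prime p -> 1 <= Rpower (INR p) σ.
Proof.
move=> σ_ge0 /INR_prime_ge2 p_ge2; rewrite -(Rpower_O (INR p)); last lra.
by apply: Rle_Rpower; lra.
Qed.

Lemma Rpower_prime_lt σ p : σ < 1 -> prime p -> Rpower (INR p) σ < INR p.
Proof.
move=> σ_lt1 /INR_prime_ge2 p_ge2; rewrite -{2}(Rpower_1 (INR p)); last lra.
by apply: Rpower_lt; lra.
Qed.

(* Rankin's trick: on the counted [n], [1 <= (smooth_part z n / Y) ^ σ]. *)
Lemma rankin_count N z σ Y : 0 < σ < 1 -> 0 < Y ->
  INR (count (fun n => Rleb Y (INR (smooth_part z n))) (iota 1 N)) <=
  INR N * \prod_(p <- primes_upto N z) euler_factor (fun p => Rpower (INR p) σ) p / Rpower Y σ.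
Proof.
move=> [σ_gt0 σ_lt1] Y_gt0; set t := fun p => Rpower (INR p) σ.
have Yσ_gt0 : 0 < Rpower Y σ by exact: exp_pos.
have t_ge1 p : prime p -> 1 <= t p := Rpower_prime_ge1 _ p (Rlt_le _ _ σ_gt0).
have t_lt p : prime p -> t p < INR p := Rpower_prime_lt _ p σ_lt1.
rewrite -[INR (count _ _)]Rmult_1_r -sumR_const.
apply: Rle_trans (_ : \sum_(n <- iota 1 N) weight t (primes_upto N z) n / Rpower Y σ <= _).
  rewrite big_mkcond big_seq [X in _ <= X]big_seq; apply: sumR_le => n.
  rewrite mem_iota add1n ltnS => n_range.
  rewrite -Rpower_prod_pfactor ?primes_upto_prime // -smooth_part_primes_upto //.
  have smooth_gt0 : 0 < Rpower (INR (smooth_part z n)) σ by exact: exp_pos.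
  case: (RlebP Y _) => [le_Y_smooth | _]; last first.
    by apply: Rmult_le_pos; [lra | left; apply: Rinv_0_lt_compat].
  apply: (Rmult_le_reg_r _ _ _ Yσ_gt0).
  rewrite /Rdiv Rmult_assoc Rinv_l ?Rmult_1_l ?Rmult_1_r; last lra.
  by apply: Rle_Rpower_l; lra.
rewrite /Rdiv -big_distrl /=; apply: Rmult_le_compat_r; first by left; apply: Rinv_0_lt_compat.
exact: sum_weight_le _ t_ge1 t_lt _ (primes_upto_uniq N z) (primes_upto_prime N z) N.
Qed.

Lemma euler_factor_Rpower_le σ a p : 0 < σ <= / 2 -> prime p -> σ * ln (INR p) <= a ->
  euler_factor (fun p => Rpower (INR p) σ) p <= 1 + 4 * σ * exp a * (ln (INR p) / INR p).
Proof.
move=> [σ_gt0 σ_le_half] p_pr le_a; have p_ge2 := INR_prime_ge2 p_pr.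
rewrite /euler_factor; set x := σ * ln (INR p); set tp := Rpower (INR p) σ.
suff : (tp - 1) / (INR p - tp) <= 4 * σ * exp a * (ln (INR p) / INR p) by lra.
have x_ge0 : 0 <= x by apply: Rmult_le_pos; [lra | apply: ln_ge0; lra].
have tp_exp : tp = exp x by [].
have tp_ge1 : 1 <= tp by rewrite tp_exp; have := exp_ineq1_le x; lra.
have tp_sub1 : tp - 1 <= x * exp a.
  (* [exp x - 1 <= x exp x] is [1 - x <= exp (- x)] multiplied by [exp x] *)
  have ex_le : exp x <= exp a := exp_le _ _ le_a.
  have ex_inv : 1 - x <= exp (- x) by have := exp_ineq1_le (- x); lra.
  have e : exp x * exp (- x) = 1 by rewrite -exp_plus Rplus_opp_r exp_0.
  by rewrite tp_exp; have := exp_pos x; nra.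
have tp_le_sqrt : tp <= sqrt (INR p).
  by rewrite /tp -Rpower_sqrt; [apply: Rle_Rpower; lra | lra].
have quarter_le : INR p / 4 <= INR p - tp.
  have sqrt_sq := sqrt_sqrt (INR p) ltac:(lra); have := sqrt_pos (INR p); nra.
apply: Rle_trans (_ : x * exp a / (INR p / 4) <= _); last by right; rewrite /x; field; lra.
apply: Rmult_le_compat; [lra | by left; apply: Rinv_0_lt_compat; lra | done |].
by apply: Rinv_le_contravar; lra.
Qed.

Lemma prod_euler_factor_le N z σ a : 4 <= z -> 0 < σ <= / 2 -> σ * ln z <= a ->
  \prod_(p <- primes_upto N z) euler_factor (fun p => Rpower (INR p) σ) p <= exp (12 * a * exp a).
Proof.
move=> z_ge4 [σ_gt0 σ_le_half] le_a; set P := primes_upto N z.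
have ln2_gt0 : 0 < ln 2 by have := ln_lt_2; lra.
have ln4_le : 2 * ln 2 <= ln z.
  by have := ln_le 4 z ltac:(lra) z_ge4; rewrite (_ : 4 = 2 * 2) ?ln_mult; lra.
have sum_le : \sum_(p <- P) ln (INR p) / INR p <= 2 * ln z + 2 * ln 2.
  apply: sum_ln_div_primes_le; last exact: primes_upto_le.
  - lra.
  - exact: primes_upto_uniq.
  - exact: primes_upto_prime.
rewrite big_seq /euler_factor.
apply: Rle_trans; first apply: prodR_1D_le_exp => p /(allP (primes_upto_prime N z)) p_pr.
  have := @Rpower_prime_ge1 σ p ltac:(lra) p_pr.
  have := @Rpower_prime_lt σ p ltac:(lra) p_pr.
  by move=> *; apply: Rmult_le_pos; [lra | left; apply: Rinv_0_lt_compat; lra].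
apply: exp_le; apply: (Rle_trans _ (\sum_(p <- P | p \in P) 4 * σ * exp a * (ln (INR p) / INR p))).
  apply: sumR_le => p p_in; have p_pr := allP (primes_upto_prime N z) p p_in.
  have /RlebP p_le_z := allP (primes_upto_le N z) p p_in.
  suff : euler_factor (fun p => Rpower (INR p) σ) p <= 1 + 4 * σ * exp a * (ln (INR p) / INR p).
    by rewrite /euler_factor; lra.
  apply: euler_factor_Rpower_le => //; apply: Rle_trans le_a; apply: Rmult_le_compat_l; first lra.
  by apply: ln_le => //; exact: INR_gt0 (prime_gt0 p_pr).
rewrite -big_distrr -big_seq /=.
have ea_gt0 := exp_pos a.
have : σ * (2 * ln z + 2 * ln 2) <= 3 * a by nra.
have : 4 * σ * exp a * \sum_(p <- P) ln (INR p) / INR p <= 4 * σ * exp a * (2 * ln z + 2 * ln 2).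
  by apply: Rmult_le_compat_l => //; nra.
nra.
Qed.

Lemma count_smooth_part_ge_le N z a Y : 1 < z -> 0 < a -> 2 * (a + 1) <= ln z -> 0 < Y ->
  INR (count (fun n => Rleb Y (INR (smooth_part z n))) (iota 1 N)) <=
  exp (12 * a * exp a) * INR N / Rpower Y (a / ln z).
Proof.
move=> z_gt1 a_gt0 lnz_ge Y_gt0.
have lnz_gt0 : 0 < ln z by lra.
have z_ge4 : 4 <= z.
  have ln2_lt1 : ln 2 < 1.
    by rewrite -[X in _ < X]ln_exp; apply: ln_increasing; have := exp_ineq1 1; lra.
  left; apply: ln_lt_inv; [lra | lra | rewrite (_ : 4 = 2 * 2) ?ln_mult; lra].
have σ_gt0 : 0 < a / ln z by apply: Rmult_lt_0_compat => //; apply: Rinv_0_lt_compat.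
have σ_le_half : a / ln z <= / 2.
  apply: (Rmult_le_reg_r (ln z)) => //; rewrite /Rdiv Rmult_assoc Rinv_l; lra.
have σ_lt1 : a / ln z < 1 by lra.
apply: Rle_trans (rankin_count N z (a / ln z) Y (conj σ_gt0 σ_lt1) Y_gt0) _.
apply: Rmult_le_compat_r; first by left; apply: Rinv_0_lt_compat; exact: exp_pos.
rewrite Rmult_comm; apply: Rmult_le_compat_r; first exact: pos_INR.
apply: prod_euler_factor_le => //; right; field; lra.
Qed.

Lemma omega_sub_omega_le_mul_ln n z : (0 < n)%N -> 1 < z ->
  (INR (omega n) - INR (omega_le z n)) * ln z <= ln (INR n).
Proof.
move=> n_gt0 z_gt1; set s := [seq p <- primes n | ~~ Rleb (INR p) z].
have -> : INR (omega n) - INR (omega_le z n) = INR (size s).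
  have count_large : count (predC (fun p => Rleb (INR p) z)) (primes n) = size s.
    by rewrite size_filter.
  rewrite /omega /omega_le size_filter -(count_predC (fun p => Rleb (INR p) z) (primes n)).
  by rewrite plus_INR count_large; lra.
have s_pr : all prime s.
  by apply/allP => p; rewrite mem_filter mem_primes => /andP [_ /and3P []].
have prod_dvd : (\prod_(p <- s) p %| n)%N.
  apply: prod_uniq_primes_dvdn => //; first exact: filter_uniq (primes_uniq n).
  by move=> p; rewrite mem_filter mem_primes => /andP [_ /and3P []].
apply: Rle_trans (ln_le _ (INR n) (INR_gt0 (prod_primes_gt0 _ s_pr)) _); last first.
  by apply: le_INR; apply/leP; exact: dvdn_leq.
rewrite ln_INR_prod_primes // -count_predT -sumR_const big_seq [X in _ <= X]big_seq.
apply: sumR_le => p p_in_s; apply: ln_le; first lra.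
by move: p_in_s; rewrite mem_filter => /andP [/RlebP ? _]; lra.
Qed.

Lemma count_le_in (T : eqType) (a b : pred T) (s : seq T) :
  {in s, forall x, a x -> b x} -> (count a s <= count b s)%N.
Proof.
elim: s => //= x s IHs sub_ab; apply: leq_add.
  by case: (boolP (a x)) => // /(sub_ab x (mem_head x s)) ->.
by apply: IHs => y y_in_s; apply: sub_ab; rewrite in_cons y_in_s orbT.
Qed.

Lemma count_not_good_le N eps z : 1 < z -> ln (INR N) / ln z < eps * ln (ln z) ->
  (count (fun n => ~~ good N eps z n) (iota 1 N) <=
   count (fun n => Rleb (Rpower (INR N) eps) (INR (smooth_part z n))) (iota 1 N))%N.
Proof.
move=> z_gt1 lnN_lt; apply: count_le_in => n; rewrite mem_iota add1n ltnS => /andP [n_gt0 le_nN].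
have lnz_gt0 : 0 < ln z by rewrite -ln_1; apply: ln_increasing; lra.
have omega_lt : Rltb (INR (omega n) - INR (omega_le z n)) (eps * ln (ln z)).
  apply/RltbP; apply: Rle_lt_trans lnN_lt.
  have lnn_le : ln (INR n) <= ln (INR N).
    by apply: ln_le; [exact: INR_gt0 | apply: le_INR; apply/leP].
  apply: (Rmult_le_reg_r (ln z)) => //; rewrite /Rdiv Rmult_assoc Rinv_l ?Rmult_1_r; last lra.
  by have := omega_sub_omega_le_mul_ln _ _ n_gt0 z_gt1; lra.
rewrite /good omega_lt andbT; case: RltbP => // /Rnot_lt_le Y_le _; exact/RlebP.
Qed.

(** * Choice of the parameter [z] *)

(* [L] stands for [ln ln N] and [exp L / K] for [ln z]. *)
Section LogScale.
Variables eps a L : R.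
Hypothesis eps_gt0 : 0 < eps.
Hypothesis a_gt0 : 0 < a.
Hypothesis L_large : 2 / (eps * eps) + 8 * eps + 4 * eps * (a + 1) < L.
Let K := eps * L / 2.

Let L_bounds : 2 / (eps * eps) < L /\ 8 * eps < L /\ 4 * eps * (a + 1) < L.
Proof.
have : 0 < 2 / (eps * eps) by apply: Rmult_lt_0_compat; [lra | apply: Rinv_0_lt_compat; nra].
have : 0 <= 4 * eps * (a + 1) by nra.
lra.
Qed.

Lemma large_L_gt0 : 0 < L.
Proof. by have := L_bounds; lra. Qed.

Let K_gt0 : 0 < K. Proof. by have := large_L_gt0; rewrite /K; nra. Qed.

Let ln_scale : ln (exp L / K) = L - ln K.
Proof.
by rewrite /Rdiv ln_mult ?ln_exp ?ln_Rinv //; [exact: exp_pos | apply: Rinv_0_lt_compat].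
Qed.

Lemma lnln_scale_gt : (1 - eps) * L < ln (exp L / K).
Proof. by rewrite ln_scale; have := ln_le_subr1 _ K_gt0; have := large_L_gt0; rewrite /K; nra. Qed.

Lemma scale_lt : exp L / K < eps * exp L.
Proof.
have [L_eps2 _] := L_bounds; have eL_gt0 := exp_pos L.
have : eps * eps * (2 / (eps * eps)) < eps * eps * L by apply: Rmult_lt_compat_l => //; nra.
rewrite (_ : eps * eps * (2 / (eps * eps)) = 2); last by field; lra.
move=> {}L_eps2; apply: (Rmult_lt_reg_r K) => //.
by rewrite /Rdiv Rmult_assoc Rinv_l ?Rmult_1_r /K; nra.
Qed.

Lemma scale_omega_lt : exp L / (exp L / K) < eps * ln (exp L / K).
Proof.
(* [ln K < 2 sqrt K <= L / 2] as soon as [K <= L^2 / 16] *)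
have [_ [L_8eps _]] := L_bounds; have L_gt0 := large_L_gt0.
have sqrtK_le : sqrt K <= L / 4.
  rewrite -(sqrt_Rsqr (L / 4)); last lra.
  by apply: sqrt_le_1_alt; rewrite /Rsqr /K; nra.
have lnK_lt := ln_lt_2sqrt _ K_gt0.
rewrite ln_scale (_ : exp L / (exp L / K) = K); last by field; have := exp_pos L; lra.
have K_def : K = eps * L / 2 by [].
suff : 0 < eps * (L / 2 - ln K) by lra.
by apply: Rmult_lt_0_compat; lra.
Qed.

Lemma scale_ge : 2 * (a + 1) <= exp L / K.
Proof.
(* [exp L >= (1 + L / 2)^2 > L^2 / 4], so [exp L / K >= L / (2 eps)] *)
have [_ [_ L_a]] := L_bounds; have L_gt0 := large_L_gt0.
have eL : exp L = exp (L / 2) * exp (L / 2) by rewrite -exp_plus; congr exp; field.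
apply: (Rle_trans _ (L / (2 * eps))).
  apply: (Rmult_le_reg_r (2 * eps)); first lra.
  by rewrite (_ : L / (2 * eps) * (2 * eps) = L); [lra | field; lra].
have -> : L / (2 * eps) = L * L / 4 / K by rewrite /K; field; lra.
rewrite /Rdiv; apply: Rmult_le_compat_r; first by left; apply: Rinv_0_lt_compat.
by rewrite eL; have := exp_ineq1_le (L / 2); nra.
Qed.

End LogScale.

Lemma eventually_ln_eq_exp (L0 : R) :
  exists N0 : nat, forall N, (N0 <= N)%N -> exists L, L0 < L /\ ln (INR N) = exp L.
Proof.
have [N0 N0_gt] := INR_unbounded (exp (exp L0)).
exists N0 => N le_N0N.
have N_gt : exp (exp L0) < INR N by apply: Rlt_le_trans N0_gt _; apply: le_INR; apply/leP.
have lnN_gt : exp L0 < ln (INR N).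
  by rewrite -[X in X < _]ln_exp; apply: ln_increasing => //; exact: exp_pos.
exists (ln (ln (INR N))); rewrite exp_ln; last by have := exp_pos L0; lra.
split => //; rewrite -[X in X < _]ln_exp; apply: ln_increasing => //; exact: exp_pos.
Qed.

Theorem lemma5p1 :
  forall A eps : R, 0 < A -> 0 < eps ->
  exists C : R, 0 < C /\
  exists N0 : nat, forall N : nat, (N0 <= N)%nat ->
  exists z : R,
    (1 - eps) * ln (ln (INR N)) < ln (ln z) /\
    z < Rpower (INR N) eps /\
    INR (count (fun n => ~~ good N eps z n) (iota 1 N))
       <= C * INR N * Rpower (ln (INR N)) (- A).
Proof.
(* [a] is chosen so that [Y ^ (a / ln z) = (ln N) ^ (2 A)] for [Y = N ^ eps]. *)
move=> A eps A_gt0 eps_gt0; pose a := 4 * A / (eps * eps).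
have a_gt0 : 0 < a by apply: Rmult_lt_0_compat; [lra | apply: Rinv_0_lt_compat; nra].
exists (exp (12 * a * exp a)); split; first exact: exp_pos.
have [N0 N0_large] := eventually_ln_eq_exp (2 / (eps * eps) + 8 * eps + 4 * eps * (a + 1)).
exists N0 => N /N0_large [L [L_large lnN]].
have L_gt0 : 0 < L by exact: large_L_gt0 L_large.
pose lz := exp L / (eps * L / 2).
have lz_ge : 2 * (a + 1) <= lz by exact: scale_ge L_large.
have z_gt1 : 1 < exp lz by have := exp_ineq1_le lz; lra.
exists (exp lz); rewrite lnN !ln_exp.
split; first exact: lnln_scale_gt L_large.
split; first by rewrite /Rpower lnN; apply: exp_increasing; exact: scale_lt L_large.
have omega_lt : ln (INR N) / ln (exp lz) < eps * ln (ln (exp lz)).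
  by rewrite lnN !ln_exp; exact: scale_omega_lt L_large.
apply: Rle_trans (le_INR _ _ (elimT leP (count_not_good_le _ _ _ z_gt1 omega_lt))) _.
apply: Rle_trans (count_smooth_part_ge_le _ _ _ _ z_gt1 a_gt0 _ (exp_pos _)) _; rewrite ln_exp //.
have Y_pow : Rpower (Rpower (INR N) eps) (a / lz) = exp (2 * A * L).
  rewrite Rpower_mult /Rpower lnN; congr exp; rewrite /lz /a.
  by field; have := exp_pos L; lra.
rewrite Y_pow /Rpower ln_exp /Rdiv -exp_Ropp; apply: Rmult_le_compat_l.
  by apply: Rmult_le_pos; [left; exact: exp_pos | exact: pos_INR].
by apply: exp_le; nra.
Qed.
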